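(* Let $T$ be a tree with $ex(T)\ge1$, and let $g:V(T)\rightarrow [0,1]$ be any minimum resolving function of $T$. If $x$ is a major vertex, an interior degree-two vertex, or a vertex belonging to $T_v$ for some $v\in M_1(T)$, then $g(x)=0$.
   Context: $d(x,y)$ is the distance in the tree. For a function $g$ on $V(T)$ and $U\subseteq V(T)$, $g(U)=\sum_{s\in U}g(s)$. $R\{x,y\}=\{z: d(x,z)\ne d(y,z)\}$; $g:V(T)\to[0,1]$ is a resolving function if $g(R\{x,y\})\ge1$ for all distinct $x,y$; $\dim_f(T)$ is the minimum of $g(V(T))$ over resolving functions, and a minimum resolving function attains it. A leaf has degree one; a major vertex has degree at least three. A leaf $\ell$ is a terminal vertex of a major vertex $v$ if $d(\ell,v)<d(\ell,w)$ for every other major vertex $w$; $ter(v)$ is the number of terminal vertices of $v$; an exterior major vertex is a major vertex with $ter(v)>0$. $M(T)$ is the set of exterior major vertices, $ex(T)=|M(T)|$, $M_1(T)=\{w\in M(T): ter(w)=1\}$. For $v\in M(T)$, $T_v$ is the subtree induced by $v$ and all vertices on the paths joining $v$ to its terminal vertices. An interior degree-two vertex is a vertex of degree $2$ such that the shortest path from it to any terminal vertex includes a major vertex. *)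

From HB Require Import structures.
From mathcomp Require Import all_boot all_order all_algebra.
From mathcomp Require Import reals.
Set Implicit Arguments. Unset Strict Implicit. Unset Printing Implicit Defensive.
Import Order.TTheory GRing.Theory Num.Theory.

Section Graph.
Variables (T : finType) (e : rel T).

Definition simple_graph : Prop := symmetric e /\ irreflexive e.

Fixpoint ball (n : nat) (x : T) : {set T} :=
  match n with
  | 0 => [set x]
  | n'.+1 => ball n' x :|: [set z | [exists w in ball n' x, e w z]]
  end.

(* graph distance: least n with y in ball n x (searched below #|T|, which
   suffices for connected graphs; returns #|T| otherwise) *)
Definition dist (x y : T) : nat := find (fun n => y \in ball n x) (iota 0 #|T|).

Definition connected_graph : Prop := forall x y : T, connect e x y.

Definition acyclic_graph : Prop :=
  ~ exists p : seq T, [/\ uniq p, 2 < size p & cycle e p].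

Definition is_tree : Prop := [/\ simple_graph, connected_graph & acyclic_graph].

Definition deg (x : T) : nat := #|[set y | e x y]|.
Definition leaf (x : T) : bool := deg x == 1.
Definition major (x : T) : bool := 2 < deg x.

Definition terminal (l v : T) : bool :=
  [&& leaf l, major v &
      [forall w, (major w && (w != v)) ==> (dist l v < dist l w)]].

Definition ter (v : T) : nat := #|[set l | terminal l v]|.

Definition exterior_major (v : T) : bool := major v && (0 < ter v).

Definition ex_T : nat := #|[set v | exterior_major v]|.

Definition in_M1 (v : T) : bool := exterior_major v && (ter v == 1).

(* z lies on the (unique) path joining x and y in the tree *)
Definition on_path (x y z : T) : bool := dist x z + dist z y == dist x y.

Definition in_Tv (v x : T) : bool :=
  (x == v) || [exists l, terminal l v && on_path v l x].

Definition is_terminal_vertex (l : T) : bool := [exists v, terminal l v].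

Definition interior_deg2 (x : T) : bool :=
  (deg x == 2) &&
  [forall l, is_terminal_vertex l ==>
     [exists w, major w && on_path x l w]].

Definition resolving {R : realType} (g : T -> R) : Prop :=
  (forall z, 0 <= g z <= 1)%R /\
  (forall x y : T, x != y -> (1 <= \sum_(z | dist x z != dist y z) g z)%R).

Definition min_resolving {R : realType} (g : T -> R) : Prop :=
  resolving g /\
  (forall h : T -> R, resolving h -> (\sum_z g z <= \sum_z h z)%R).

End Graph.

(* For a major vertex v and a neighbour a of v, the branch of T - v through a is
   a leg of v when it contains no major vertex.  Call a a leg root when a starts
   a leg of a vertex having at least two legs.  Two leg roots of the same vertex v
   are resolved only by vertices of their two legs, so any resolving function puts
   weight at least half the number of legs of v on the legs of v.  Conversely any
   two vertices are resolved by two distinct leg roots (by parity when their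
   distance is odd, by the two branches at the midpoint of their geodesic
   otherwise), so the weight 1/2 on every leg root is resolving.  Distinct legs
   are disjoint, hence a minimum resolving function vanishes off the legs; major
   vertices, interior degree-two vertices and the vertices of T_v with
   v in M_1(T) all lie off the legs. *)

From Pilot Require Import Defs.
From HB Require Import structures.
From mathcomp Require Import all_boot all_order all_algebra.
From mathcomp Require Import reals zify lra.
Import Order.TTheory GRing.Theory Num.Theory.
Set Implicit Arguments. Unset Strict Implicit. Unset Printing Implicit Defensive.

Section NonnegativeSums.
Local Open Scope ring_scope.
Variables (R : numDomainType) (I : finType) (F : I -> R).
Hypothesis F_ge0 : forall i, 0 <= F i.

Lemma ler_sum_cover2 (P Q1 Q2 : pred I) : (forall i, P i -> Q1 i || Q2 i) ->
  \sum_(i | P i) F i <= \sum_(i | Q1 i) F i + \sum_(i | Q2 i) F i.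
Proof.
move=> PQ; rewrite big_mkcond [\sum_(i | Q1 i) _]big_mkcond.
rewrite [\sum_(i | Q2 i) _]big_mkcond -big_split /=; apply: ler_sum => i _.
have := F_ge0 i; case: (boolP (P i)) => [/PQ Q12 | _] Fi_ge0.
  by case/orP: Q12 => ->; case: ifP; rewrite ?addr0 ?lerDl ?lerDr.
by rewrite addr_ge0 //; case: ifP.
Qed.

Lemma ler_sum_pair (P : pred I) a b : a != b -> P a -> P b ->
  F a + F b <= \sum_(i | P i) F i.
Proof.
move=> nab Pa Pb; rewrite (bigD1 a) //= lerD2l (bigD1 b) /= ?Pb 1?eq_sym //.
by rewrite lerDl sumr_ge0.
Qed.

Lemma ler_add_sum_notin (A : {set I}) x : x \notin A ->
  F x + \sum_(i in A) F i <= \sum_i F i.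
Proof.
move=> xNA; rewrite [leRHS](bigD1 x) //= lerD2l big_mkcond [leRHS]big_mkcond.
apply: ler_sum => i _; case: ifP => [iA | _]; last by case: ifP.
by rewrite ifT //; apply: contraNneq xNA => <-.
Qed.

Lemma ler_sum_disjoint_family (J : finType) (P : pred J) (B : J -> {set I}) :
  (forall j j' i, P j -> P j' -> i \in B j -> i \in B j' -> j = j') ->
  \sum_(j | P j) \sum_(i in B j) F i <= \sum_(i in \bigcup_(j | P j) B j) F i.
Proof.
move=> B_disj.
rewrite (exchange_big_dep (mem (\bigcup_(j | P j) B j))) /=; last first.
  by move=> j i Pj iBj; apply/bigcupP; exists j.
apply: ler_sum => i _.
case: (pickP [pred j | P j && (i \in B j)]) => [j /andP [Pj iBj] | none].
  rewrite (bigD1 j) ?Pj //= big1 ?addr0 // => j' /andP [/andP [Pj' iBj'] nj'j].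
  by rewrite (B_disj _ _ _ Pj' Pj iBj' iBj) eqxx in nj'j.
by rewrite big_pred0.
Qed.

End NonnegativeSums.

Section HalfBound.
Local Open Scope ring_scope.
Variables (R : realFieldType) (I : finType).

Lemma half_card_le_sum (A : {set I}) (G : I -> R) :
  (1 < #|A|)%N -> {in A &, forall a b, a != b -> 1 <= G a + G b} ->
  #|A|%:R / 2 <= \sum_(a in A) G a.
Proof.
move=> A_gt1 G_pair.
have [/existsP [m /andP [mA Gm_lt]] | /existsPn G_big] :=
  boolP [exists m in A, G m < 2^-1].
  rewrite (big_setD1 m mA) (cardsD1 m A) mA natrD /=.
  have le_S : #|A :\ m|%:R * (1 - G m) <= \sum_(a in A :\ m) G a.
    rewrite mulr_natl -sumr_const; apply: ler_sum => a.
    rewrite !inE => /andP [nam aA]; by have := G_pair a m aA mA nam; lra.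
  have k_ge1 : 1 <= #|A :\ m|%:R :> R.
    by rewrite ler1n; move: A_gt1; rewrite (cardsD1 m A) mA; lia.
  move: (#|A :\ m|%:R : R) (\sum_(a in A :\ m) G a) k_ge1 le_S => k S k_ge1 le_S.
  (* [G m + k (1 - G m) - (k + 1) / 2 = (k - 1) (1/2 - G m)] *)
  have : 0 <= (k - 1) * (2^-1 - G m) by apply: mulr_ge0; lra.
  nra.
rewrite mulr_natl -sumr_const; apply: ler_sum => a aA.
by have := G_big a; rewrite aA /= -leNgt.
Qed.

End HalfBound.

Section Tree.
Variables (T : finType) (e : rel T).
Hypotheses (esym : symmetric e) (eirr : irreflexive e)
  (econn : connected_graph e) (eacyc : acyclic_graph e).

Local Notation dist := (dist e).
Local Notation ball := (ball e).
Local Notation major := (major e).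
Local Notation leaf := (leaf e).

(** * Distances *)

Lemma ballS n x y :
  (y \in ball n.+1 x) = (y \in ball n x) || [exists w in ball n x, e w y].
Proof. by rewrite /= !inE. Qed.

Lemma subset_ball m n x : m <= n -> ball m x \subset ball n x.
Proof.
elim: n => [|n IHn]; first by rewrite leqn0 => /eqP ->.
rewrite leq_eqVlt => /orP [/eqP -> // | /IHn sub_mn].
exact: subset_trans sub_mn (subsetUl _ _).
Qed.

Lemma ball_adj_subset n y w : e y w -> ball n w \subset ball n.+1 y.
Proof.
move=> eyw; elim: n => [|n IHn]; apply/subsetP => z.
  by rewrite inE => /eqP ->; rewrite ballS; apply/orP; right;
     apply/existsP; exists y; rewrite inE eqxx.
rewrite ballS => /orP [zn | /existsP [u /andP [un euz]]].
  by apply: (subsetP (subset_ball _ (leqnSn _))); exact: (subsetP IHn).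
by rewrite ballS; apply/orP; right; apply/existsP; exists u; rewrite (subsetP IHn).
Qed.

Lemma path_last_ball x p : path e x p -> last x p \in ball (size p) x.
Proof.
elim: p x => [|u p IHp] x /=; first by rewrite inE.
by move=> /andP [exu /IHp]; apply: (subsetP (ball_adj_subset _ exu)).
Qed.

Lemma ball_radius_lt_card x y : exists2 n, n < #|T| & y \in ball n x.
Proof.
have /connectP [p xp ->] := econn x y.
have [p' xp' uniq_p' _] := shortenP xp.
exists (size p'); last exact: path_last_ball.
by have /= <- := card_uniqP uniq_p'; exact: max_card.
Qed.

Lemma mem_ball n x y : (y \in ball n x) = (dist x y <= n).
Proof.
have has_ball : has (fun n => y \in ball n x) (iota 0 #|T|).
  by have [m lt_m ym] := ball_radius_lt_card x y; apply/hasP; exists m;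
     rewrite ?mem_iota.
have lt_find := has_ball; rewrite has_find size_iota in lt_find.
have := nth_find 0 has_ball; rewrite nth_iota // add0n => y_dist.
apply/idP/idP => [yn | le_n]; last exact: subsetP (subset_ball x le_n) _ y_dist.
rewrite leqNgt; apply/negP => lt_n.
have := before_find 0 lt_n; rewrite nth_iota ?add0n ?yn //.
exact: ltn_trans lt_n lt_find.
Qed.

Lemma mem_ball_dist x y : y \in ball (dist x y) x.
Proof. by rewrite mem_ball. Qed.

Lemma dist_eq0 x y : (dist x y == 0) = (x == y).
Proof. by rewrite -leqn0 -mem_ball inE eq_sym. Qed.

Lemma dist0_eq x y : dist x y = 0 -> x = y.
Proof. by move/eqP; rewrite dist_eq0 => /eqP. Qed.

Lemma distxx x : dist x x = 0.
Proof. by apply/eqP; rewrite dist_eq0. Qed.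

Lemma dist_adjr x u w : e u w -> dist x w <= (dist x u).+1.
Proof.
by move=> euw; rewrite -mem_ball ballS; apply/orP; right;
   apply/existsP; exists u; rewrite mem_ball_dist.
Qed.

Lemma dist_adjl y w z : e y w -> dist y z <= (dist w z).+1.
Proof.
by move=> eyw; rewrite -mem_ball; apply: (subsetP (ball_adj_subset _ eyw));
   exact: mem_ball_dist.
Qed.

Lemma last_step x y : x != y -> exists2 w, e w y & (dist x w).+1 = dist x y.
Proof.
move=> nxy; case Exy: (dist x y) => [|n].
  by move/dist0_eq: Exy nxy => ->; rewrite eqxx.
have := mem_ball_dist x y; rewrite Exy ballS mem_ball Exy ltnn /=.
case/existsP => w /andP [wn ewy]; exists w => //.
by apply/eqP; rewrite eqn_leq ltnS -mem_ball wn -Exy dist_adjr.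
Qed.

Lemma distC x y : dist x y = dist y x.
Proof.
suff le_dist a b : dist b a <= dist a b by apply/eqP; rewrite eqn_leq !le_dist.
move Eab: (dist a b) => n; elim: n b Eab => [|n IHn] b Eab.
  by rewrite (dist0_eq Eab) distxx.
have [|w ewb Eaw] := @last_step a b; first by rewrite -dist_eq0 Eab.
apply: leq_trans (dist_adjl _ _) _; first by rewrite esym; exact: ewb.
by rewrite ltnS IHn //; apply: succn_inj; rewrite Eaw.
Qed.

Lemma first_step u z : u != z -> exists2 w, e u w & (dist w z).+1 = dist u z.
Proof.
rewrite eq_sym => nzu; have [w ewu Ezw] := last_step nzu.
by exists w; rewrite 1?esym // distC Ezw distC.
Qed.

Lemma dist_triangle x y z : dist x z <= dist x y + dist y z.
Proof.
move Eyz: (dist y z) => n; elim: n z Eyz => [|n IHn] z Eyz.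
  by rewrite (dist0_eq Eyz) addn0.
have [|w ewz Eyw] := @last_step y z; first by rewrite -dist_eq0 Eyz.
apply: leq_trans (dist_adjr _ ewz) _; rewrite addnS ltnS IHn //.
by apply: succn_inj; rewrite Eyw.
Qed.

Lemma dist_adj u w : e u w -> dist u w = 1.
Proof.
move=> euw; have := dist_adjr u euw; rewrite distxx => le1.
apply/eqP; rewrite eqn_leq le1 lt0n dist_eq0.
by apply: contraTneq euw => ->; rewrite eirr.
Qed.

Lemma adj_path_mem y c c' p : e y c -> e y c' -> c != c' ->
  path e c p -> last c p = c' -> y \in c :: p.
Proof.
move=> eyc + + cp; case: (shortenP cp) => p' cp' uniq_cp' sub_p' eyc' ncc' lastp.
apply/negPn/negP => y_notin; apply: eacyc; exists [:: y, c & p']; split.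
- rewrite cons_uniq uniq_cp' andbT; apply: contra y_notin.
  by rewrite !inE => /orP [-> // | /sub_p' ->]; rewrite orbT.
- by case: p' {cp' uniq_cp' sub_p'} lastp => //= cc'; rewrite cc' eqxx in ncc'.
- by rewrite /cycle rcons_path /= eyc cp' /= lastp esym.
Qed.

Lemma ball_path z n u u' : dist u z <= n -> dist u' z <= n ->
  exists p, [/\ path e u p, last u p = u' & all (fun w => dist w z <= n) p].
Proof.
move: {2}(dist u z + dist u' z) (leqnn (dist u z + dist u' z)) => k.
elim: k u u' => [|k IHk] u u' le_k uz u'z.
  have uz0 : dist u z = 0 by lia.
  have u'z0 : dist u' z = 0 by lia.
  by rewrite (dist0_eq uz0) (dist0_eq u'z0); exists [::].
have [<- | nuu'] := eqVneq u u'; first by exists [::].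
have [uz_eq | nuz] := eqVneq u z.
  have [|w' eu'w' Ew'] := @first_step u' z; first by rewrite -uz_eq eq_sym.
  have [|||p [up lastp p_near]] := IHk u w'; try lia.
  exists (rcons p u'); split; rewrite ?last_rcons //.
    by rewrite rcons_path up lastp esym.
  by rewrite all_rcons u'z.
have [w euw Ew] := first_step nuz.
have [|||p [wp lastp p_near]] := IHk w u'; try lia.
by exists (w :: p); split => //=; rewrite ?euw ?p_near ?andbT //; lia.
Qed.

Lemma dist_adj_neq y c z : e y c -> dist c z != dist y z.
Proof.
(* Otherwise geodesics from [y] and [c] towards [z] close a cycle through [y c]. *)
move=> eyc; apply/eqP => Ecy.
have [yz | nyz] := eqVneq y z.
  by move: eyc Ecy; rewrite yz distxx => ezc /dist0_eq cz; rewrite cz eirr in ezc.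
have ncz : c != z by rewrite -dist_eq0 Ecy dist_eq0.
have [y1 eyy1 Ey1] := first_step nyz; have [c1 ecc1 Ec1] := first_step ncz.
have [||p [c1p lastp p_near]] := @ball_path z (dist y z).-1 c1 y1; try lia.
have := @adj_path_mem y c y1 (c1 :: p) eyc eyy1; rewrite /= ecc1 c1p lastp.
have -> : c != y1 by apply/eqP => cy1; move: Ey1; rewrite -cy1 Ecy; lia.
rewrite !inE => /(_ isT isT erefl) /or3P [/eqP yc | /eqP yc1 | yp].
- by move: eyc; rewrite -yc eirr.
- by move: Ec1; rewrite -yc1 Ecy; lia.
- by move/allP: p_near => /(_ y yp); lia.
Qed.

Lemma closer_adj_unique y c c' z : e y c -> e y c' ->
  dist c z < dist y z -> dist c' z < dist y z -> c = c'.
Proof.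
move=> eyc eyc' lt_c lt_c'; apply/eqP/negPn/negP => ncc'.
have [||p [cp lastp p_near]] := @ball_path z (dist y z).-1 c c'; try lia.
have /orP [/eqP yc | yp] := adj_path_mem eyc eyc' ncc' cp lastp.
  by move: lt_c; rewrite yc ltnn.
by move/allP: p_near => /(_ y yp); lia.
Qed.

Lemma dist_adj_cases y c z : e y c ->
  dist c z = (dist y z).+1 \/ dist y z = (dist c z).+1.
Proof.
move=> eyc; have := dist_adjl z eyc; rewrite esym in eyc.
have := dist_adjl z eyc; have := dist_adj_neq z eyc; lia.
Qed.

Lemma dist_adj_farther y c c' z : e y c -> e y c' ->
  dist c z < dist y z -> c' != c -> dist c' z = (dist y z).+1.
Proof.
move=> eyc eyc' lt_c; case: (dist_adj_cases z eyc') => // Eyc'.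
by rewrite (closer_adj_unique eyc' eyc _ lt_c) ?eqxx // Eyc'.
Qed.

Lemma dist_parity x y z : (dist x z + dist y z) %% 2 = dist x y %% 2.
Proof.
move Eyz: (dist y z) => n; elim: n z Eyz => [|n IHn] z Eyz.
  by rewrite (dist0_eq Eyz) addn0.
have [|w ewz Eyw] := @last_step y z; first by rewrite -dist_eq0 Eyz.
have := IHn w (succn_inj (etrans Eyw Eyz)).
by have := dist_adj_cases x ewz; rewrite (distC z x) (distC w x); lia.
Qed.

Lemma geodesic_point x y k : k <= dist y x ->
  exists m, dist m x + k = dist y x /\ dist y m = k.
Proof.
elim: k => [|k IHk] le_k; first by exists y; rewrite addn0 distxx.
have [m [Emx Eym]] := IHk (ltnW le_k).
have [|m' emm' Em'] := @first_step m x; first by rewrite -dist_eq0; lia.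
exists m'; split; first lia.
by have := dist_adjr y emm'; have := dist_triangle y m' x; lia.
Qed.

(** * Branches and legs *)

(* For an edge [v a], the vertex set of the component of [T - v] containing [a]. *)
Definition branch v a := [set u | dist u a < dist u v].

Lemma branch_root v a : e v a -> a \in branch v a.
Proof. by move=> eva; rewrite inE distxx distC dist_adj. Qed.

Lemma centre_notin_branch v a : v \notin branch v a.
Proof. by rewrite inE distxx. Qed.

Lemma dist_in_branch v a u : e v a -> u \in branch v a -> dist u v = (dist u a).+1.
Proof.
move=> eva; rewrite inE (distC u a) (distC u v) => lt_a.
by case: (dist_adj_cases u eva) => //; lia.
Qed.

Lemma dist_notin_branch v a u : e v a -> u \notin branch v a ->
  dist u a = (dist u v).+1.
Proof.
move=> eva; rewrite inE -leqNgt (distC u a) (distC u v) => le_v.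
by case: (dist_adj_cases u eva) => //; lia.
Qed.

Lemma branch_exit v a u w : e v a -> u \in branch v a -> e u w ->
  w \notin branch v a -> u = a /\ w = v.
Proof.
move=> eva ua euw wNa.
have Eu := dist_in_branch eva ua; have Ew := dist_notin_branch eva wNa.
have := dist_adj_cases a euw; have := dist_adj_cases v euw => Ev Ea.
have Ewv : dist w v = dist u a by lia.
case Eua: (dist u a) => [|t].
  by move: Ewv; rewrite Eua => /dist0_eq; rewrite (dist0_eq Eua).
have [|u' euu' Eu'] := @first_step u a; first by rewrite -dist_eq0 Eua.
have nu'w : u' != w by apply/eqP => u'w; move: Eu'; rewrite u'w; lia.
have := dist_adj_farther (z := v) euw euu' ltac:(lia) nu'w.
by have := dist_triangle u' a v; rewrite (distC a) (dist_adj eva); lia.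
Qed.

Lemma dist_through_branch v a z y : e v a -> z \in branch v a ->
  y \notin branch v a -> dist z y = dist z v + dist v y.
Proof.
move=> eva; move Ezy: (dist z y) => n; elim: n z Ezy => [|n IHn] z Ezy za yNa.
  by move: za; rewrite (dist0_eq Ezy) (negPf yNa).
have [|w ezw Ew] := @first_step z y; first by rewrite -dist_eq0 Ezy.
have [wa | wNa] := boolP (w \in branch v a).
  have := IHn w (succn_inj (etrans Ew Ezy)) wa yNa.
  by have := dist_adjl v ezw; have := dist_triangle z v y; lia.
have [za_eq wv] := branch_exit eva za ezw wNa; subst z w.
by rewrite (distC a v) (dist_adj eva); lia.
Qed.

Lemma branch_disjoint v a b u : e v a -> e v b -> a != b ->
  u \in branch v a -> u \notin branch v b.
Proof.
move=> eva evb nab; rewrite !inE => lt_a; apply: contra nab => lt_b.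
apply/eqP; apply: (closer_adj_unique (z := u) eva evb).
  by rewrite distC (distC v u).
by rewrite distC (distC v u).
Qed.

Lemma branch_adj_closed v a w b : e v a -> w \in branch v a -> e w b -> b != v ->
  b \in branch v a.
Proof.
move=> eva wa ewb nbv; apply/negPn/negP => bNa.
by have [_ bv] := branch_exit eva wa ewb bNa; rewrite bv eqxx in nbv.
Qed.

Lemma resolved_in_branches v a b z : e v a -> e v b ->
  dist a z != dist b z -> (z \in branch v a) || (z \in branch v b).
Proof.
move=> eva evb; apply: contraR; rewrite negb_or => /andP [zNa zNb].
rewrite (distC a) (distC b) (dist_notin_branch eva zNa).
by rewrite (dist_notin_branch evb zNb).
Qed.

Lemma branch_has_leaf v a : e v a -> exists2 l, l \in branch v a & leaf l.
Proof.
move=> eva; pose l := [arg max_(l > a in branch v a) dist l v].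
have [la l_max] :
    l \in branch v a /\ {in branch v a, forall u, dist u v <= dist l v}.
  by rewrite /l; case: arg_maxnP => //; exact: branch_root.
exists l => //; have [|p elp Ep] := @first_step l v.
  by apply: contraTneq la => ->; exact: centre_notin_branch.
rewrite /leaf /Defs.leaf /deg (_ : [set y | e l y] = [set p]) ?cards1 //.
apply/setP => y; rewrite !inE; apply/idP/eqP => [ely | -> //].
apply/eqP/negPn/negP => nyp.
have Ey := dist_adj_farther (z := v) elp ely ltac:(lia) nyp.
have /l_max : y \in branch v a.
  by rewrite (branch_adj_closed eva la ely) // -dist_eq0 Ey.
by rewrite Ey ltnn.
Qed.

(* The legs of [v] are the paths from [v] to its terminal vertices, and the
   [multi_leg] vertices are the exterior major vertices [v] with [ter v >= 2]. *)
Definition leg v a := e v a && [forall u in branch v a, ~~ major u].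
Definition legs v := [set a | leg v a].
Definition multi_leg v := major v && (1 < #|legs v|).
Definition leg_pairs := [set p : T * T | multi_leg p.1 && leg p.1 p.2].
Definition leg_roots := [set p.2 | p in leg_pairs].
Definition leg_cover := \bigcup_(p in leg_pairs) branch p.1 p.2.

Lemma leg_adj v a : leg v a -> e v a.
Proof. by case/andP. Qed.

Lemma major_notin_leg v a u : leg v a -> major u -> u \notin branch v a.
Proof. by case/andP=> _ /forall_inP no_major; apply: contraL => /no_major. Qed.

Lemma leg_or_major_branch v a : e v a ->
  leg v a \/ exists2 w, w \in branch v a & major w.
Proof.
move=> eva; rewrite /leg eva /=.
have [|/forall_inPn [w wa /negPn]] := boolP [forall u in branch v a, ~~ major u].
  by left.
by right; exists w.
Qed.

Lemma mem_leg_roots v a : multi_leg v -> leg v a -> a \in leg_roots.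
Proof. by move=> mv va; apply/imsetP; exists (v, a); rewrite ?inE /= ?mv. Qed.

Lemma farthest_major_legs m c w p : e m c -> w \in branch m c ->
  {in branch m c, forall u, major u -> dist u m <= dist w m} ->
  e w p -> (dist p m).+1 = dist w m ->
  forall a, e w a -> a != p -> leg w a && (a \in branch m c).
Proof.
(* A major vertex beyond [w] would be farther from [m] than [w]. *)
move=> emc wc w_max ewp Ep a ewa nap.
have mNa : m \notin branch w a.
  rewrite inE (distC m a) (distC m w); apply: contra nap => lt_a.
  by apply/eqP; apply: (closer_adj_unique (z := m) ewa ewp) => //; lia.
have nam : a != m by apply: contraNneq mNa => <-; exact: branch_root.
rewrite (branch_adj_closed emc wc ewa nam) andbT /leg ewa.
apply/forall_inP => u ua; apply/negP => major_u.
have Eum := dist_through_branch ewa ua mNa.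
have /negPf nuw : u != w by apply: contraTneq ua => ->; exact: centre_notin_branch.
have uc : u \in branch m c.
  move: wc; rewrite !inE => wc; have := dist_triangle u w c.
  by move: nuw; rewrite -dist_eq0; lia.
by have := w_max u uc major_u; move: nuw; rewrite -dist_eq0; lia.
Qed.

Lemma branch_major_leg_roots m c : e m c ->
  (exists2 w, w \in branch m c & major w) -> 1 < #|leg_roots :&: branch m c|.
Proof.
move=> emc [w0 w0c major_w0].
pose w := [arg max_(w > w0 | (w \in branch m c) && major w) dist w m].
have [/andP [wc major_w] w_max] : (w \in branch m c) && major w /\
    {in branch m c, forall u, major u -> dist u m <= dist w m}.
  rewrite /w; case: arg_maxnP => [|u u_ok u_max]; first by rewrite w0c.
  by split=> // v vc major_v; apply: u_max; rewrite vc.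
have [|p ewp Ep] := @first_step w m.
  by apply: contraTneq wc => ->; exact: centre_notin_branch.
have wlegs := farthest_major_legs emc wc w_max ewp Ep.
pose N := [set y | e w y] :\ p.
have N_gt1 : 1 < #|N|.
  by move: major_w; rewrite /Defs.major /deg (cardsD1 p) inE ewp.
have mw : multi_leg w.
  rewrite /multi_leg major_w (leq_trans N_gt1) // subset_leq_card //.
  by apply/subsetP => y; rewrite !inE => /andP [nyp /wlegs/(_ nyp)/andP []].
apply: (leq_trans N_gt1); apply/subset_leq_card/subsetP => a /setD1P [nap].
rewrite inE => ewa; have /andP [wa ac] := wlegs a ewa nap.
by rewrite in_setI ac (mem_leg_roots mw).
Qed.

Lemma leg_leaf_terminal v a l : major v -> leg v a -> l \in branch v a -> leaf l ->
  terminal e l v.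
Proof.
move=> major_v va la leaf_l; rewrite /terminal leaf_l major_v /=.
apply/forallP => w; apply/implyP => /andP [major_w nwv].
rewrite (dist_through_branch (leg_adj va) la (major_notin_leg va major_w)).
by move: nwv; rewrite eq_sym -dist_eq0; lia.
Qed.

Lemma card_legs_le_ter v : major v -> #|legs v| <= ter e v.
Proof.
move=> major_v; pose f a := odflt v [pick l in branch v a | leaf l].
have fP a : a \in legs v -> (f a \in branch v a) && leaf (f a).
  rewrite inE /f => /leg_adj /branch_has_leaf [l la leaf_l].
  by case: pickP => [// | /(_ l)]; rewrite la leaf_l.
rewrite -(@card_in_imset _ _ f); last first.
  move=> a b av bv fab; apply/eqP/negPn/negP => nab.
  have /andP [fa _] := fP a av; have /andP [fb _] := fP b bv.
  move: av bv; rewrite !inE => /leg_adj eva /leg_adj evb.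
  by move: (branch_disjoint eva evb nab fa); rewrite fab fb.
apply/subset_leq_card/subsetP => _ /imsetP [a av ->].
have /andP [fa leaf_fa] := fP a av; rewrite inE in av.
by rewrite inE (leg_leaf_terminal major_v av fa leaf_fa).
Qed.

Lemma interior_deg2_notin_leg v a x : major v -> leg v a -> interior_deg2 e x ->
  x \notin branch v a.
Proof.
(* The geodesic from [x] to the leaf ending its leg meets no major vertex. *)
move=> major_v va /andP [_ /forall_inP x_interior]; apply/negP => xa.
have eva := leg_adj va; have [l la leaf_l] := branch_has_leaf eva.
have /x_interior /existsP [w /andP [major_w /eqP on_xlw]] : is_terminal_vertex e l.
  by apply/existsP; exists v; exact: leg_leaf_terminal la leaf_l.
have wNa := major_notin_leg va major_w.
have := dist_through_branch eva xa wNa; have := dist_through_branch eva la wNa.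
have := dist_in_branch eva xa; have := dist_in_branch eva la.
have := dist_triangle x a l; rewrite (distC w l) (distC a l) in on_xlw *; lia.
Qed.

Lemma M1_Tv_notin_leg v a v' x : multi_leg v -> leg v a -> in_M1 e v' ->
  in_Tv e v' x -> x \notin branch v a.
Proof.
move=> /andP [major_v legs_gt1] va /andP [/andP [major_v' _] /eqP ter1].
have v'Na := major_notin_leg va major_v'; have eva := leg_adj va.
case/orP => [/eqP -> // | /existsP [l /andP [l_ter /eqP on_v'lx]]].
apply/negP => xa; have [la | lNa] := boolP (l \in branch v a); last first.
  have := dist_through_branch eva xa v'Na; have := dist_through_branch eva xa lNa.
  have := dist_triangle v' v l; have : x != v by apply: contraTneq xa => ->;
    exact: centre_notin_branch.
  by rewrite -dist_eq0 (distC v' x) (distC v' v) in on_v'lx *; lia.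
(* Now [l] would be a terminal vertex of both [v] and [v']. *)
have /and3P [leaf_l _ /forall_inP l_near_v'] := l_ter.
have /and3P [_ _ /forall_inP l_near_v] := leg_leaf_terminal major_v va la leaf_l.
have [v'v | nv'v] := eqVneq v' v.
  by have := card_legs_le_ter major_v; rewrite -v'v ter1 v'v; lia.
have := l_near_v v'; have := l_near_v' v.
by rewrite major_v major_v' nv'v eq_sym nv'v => /(_ isT) + /(_ isT); lia.
Qed.

Lemma leg_pairs_branch_unique p q z : p \in leg_pairs -> q \in leg_pairs ->
  z \in branch p.1 p.2 -> z \in branch q.1 q.2 -> p = q.
Proof.
case: p q => [v a] [v' a'] + + za za'; rewrite !inE /=.
move=> /andP [/andP [major_v _] va] /andP [/andP [major_v' _] v'a'].
have := dist_through_branch (leg_adj va) za (major_notin_leg va major_v').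
have := dist_through_branch (leg_adj v'a') za' (major_notin_leg v'a' major_v).
rewrite (distC v' v) => Ezv Ezv'; have vv' : v = v' by apply: dist0_eq; lia.
subst v'; have [-> // | naa'] := eqVneq a a'.
by move: (branch_disjoint (leg_adj va) (leg_adj v'a') naa' za); rewrite za'.
Qed.

(** * Leg roots resolve all pairs of vertices *)

Lemma odd_dist_resolves x y z : odd (dist x y) -> dist x z != dist y z.
Proof.
move=> odd_xy; apply/eqP => Exz; move: (dist_parity x y z).
by rewrite Exz addnn !modn2 odd_double odd_xy.
Qed.

Lemma branch_closer m c x y z : e m c -> (dist c x).+1 = dist m x ->
  dist c y = (dist m y).+1 -> z \in branch m c ->
  dist z x + dist m y < dist z y + dist m x.
Proof.
move=> emc Ecx Ecy zc.
have yNc : y \notin branch m c by rewrite inE (distC y c) (distC y m) Ecy; lia.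
have := dist_through_branch emc zc yNc; have := dist_in_branch emc zc.
by have := dist_triangle z c x; lia.
Qed.

Lemma even_dist_branches x y : x != y -> ~~ odd (dist x y) ->
  exists m x' y', [/\ e m x', e m y', x' != y',
    {in branch m x', forall z, dist x z != dist y z} &
    {in branch m y', forall z, dist x z != dist y z}].
Proof.
move=> nxy even_xy; have [h Eh] : exists h, dist x y = h + h.
  exists (dist x y)./2.
  by rewrite addnn -{1}(odd_double_half (dist x y)) (negPf even_xy).
have h_gt0 : 0 < h by move: nxy; rewrite -dist_eq0 Eh; lia.
have [|m [Emx Eym]] := @geodesic_point x y h; first by rewrite distC Eh; lia.
rewrite (distC y x) Eh in Emx; rewrite (distC y m) in Eym.
have [|x' emx' Ex'] := @first_step m x; first by rewrite -dist_eq0; lia.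
have [|y' emy' Ey'] := @first_step m y; first by rewrite -dist_eq0; lia.
have nx'y' : x' != y'.
  apply/eqP => x'y'; rewrite -x'y' in Ey'.
  by have := dist_triangle x x' y; rewrite (distC x x'); lia.
have Ex'y := dist_adj_farther (z := y) emy' emx' ltac:(lia) nx'y'.
have Ey'x := dist_adj_farther (z := x) emx' emy' ltac:(lia) ltac:(by rewrite eq_sym).
exists m, x', y'; split=> // z zc.
  by have := branch_closer emx' Ex' Ex'y zc; rewrite (distC x z) (distC y z); lia.
by have := branch_closer emy' Ey' Ey'x zc; rewrite (distC x z) (distC y z); lia.
Qed.

Lemma leg_roots_resolve x y : (exists w, major w) -> x != y ->
  1 < #|[set a in leg_roots | dist x a != dist y a]|.
Proof.
move=> [w0 major_w0] nxy.
have major_branch_resolves m c : e m c ->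
    {in branch m c, forall z, dist x z != dist y z} ->
    (exists2 w, w \in branch m c & major w) ->
  1 < #|[set a in leg_roots | dist x a != dist y a]|.
  move=> emc c_res /(branch_major_leg_roots emc) /leq_trans; apply.
  apply/subset_leq_card/subsetP => a /setIP [ar /c_res xya].
  by rewrite inE ar xya.
have [odd_xy | even_xy] := boolP (odd (dist x y)).
  have /card_gt0P [m] : 0 < #|[set y | e w0 y]| by exact: leq_trans _ major_w0.
  rewrite inE esym => emw0; apply: (major_branch_resolves m w0 emw0).
    by move=> z _; exact: odd_dist_resolves.
  by exists w0 => //; exact: branch_root.
have [m [x' [y' [emx' emy' nx'y' x'_res y'_res]]]] := even_dist_branches nxy even_xy.
have [x'_leg | ] := leg_or_major_branch emx'; last exact: major_branch_resolves.
have [y'_leg | ] := leg_or_major_branch emy'; last exact: major_branch_resolves.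
have major_m : major m.
  have [<- // | nw0m] := eqVneq w0 m.
  have [|c emc Ec] := @first_step m w0; first by rewrite eq_sym.
  have w0c : w0 \in branch m c by rewrite inE (distC w0 c) (distC w0 m) -Ec.
  apply/card_gt2P; exists x', y', c; rewrite !inE emx' emy' emc; split=> //.
  split=> //; first by apply: contraTneq w0c => <-; exact: major_notin_leg.
  by apply: contraTneq w0c => ->; exact: major_notin_leg.
have mm : multi_leg m.
  by rewrite /multi_leg major_m; apply/card_gt1P; exists x', y'; rewrite !inE.
apply/card_gt1P; exists x', y'; rewrite !inE !(mem_leg_roots mm) //.
by rewrite x'_res ?y'_res ?branch_root.
Qed.

Lemma special_notin_leg_cover x :
  major x || interior_deg2 e x || [exists v, in_M1 e v && in_Tv e v x] ->
  x \notin leg_cover.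
Proof.
move=> x_special; apply/bigcupP => -[[v a]]; rewrite inE /= => /andP [mv va].
apply/negP; case/orP: x_special => [/orP [major_x | int_x] | /existsP [v' /andP []]].
- exact: major_notin_leg.
- exact: interior_deg2_notin_leg (andP mv).1 va int_x.
- exact: M1_Tv_notin_leg.
Qed.

Section MinimumResolving.
Local Open Scope ring_scope.
Variable R : realType.

Definition leg_root_weight (z : T) : R := if z \in leg_roots then 2^-1 else 0.

Lemma resolving_ge0 (g : T -> R) : resolving e g -> forall z, 0 <= g z.
Proof. by case=> g01 _ z; case/andP: (g01 z). Qed.

Lemma leg_root_weight_resolving : (exists w, major w) -> resolving e leg_root_weight.
Proof.
move=> has_major; split=> [z | x y nxy].
  by rewrite /leg_root_weight; case: ifP => _; apply/andP; split; lra.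
have [a [b []]] := card_gt1P (leg_roots_resolve has_major nxy).
rewrite !inE => /andP [ar xya] /andP [br xyb] nab.
have w_ge0 z : 0 <= leg_root_weight z.
  by rewrite /leg_root_weight; case: ifP => _; lra.
apply: le_trans (ler_sum_pair w_ge0 nab xya xyb).
by rewrite /leg_root_weight ar br; lra.
Qed.

Lemma sum_leg_pairs (F : T -> T -> R) :
  \sum_(p in leg_pairs) F p.1 p.2 = \sum_(v | multi_leg v) \sum_(a in legs v) F v a.
Proof. by rewrite pair_big_dep; apply: eq_bigl => -[v a]; rewrite !inE. Qed.

Lemma sum_leg_root_weight :
  \sum_z leg_root_weight z <= \sum_(v | multi_leg v) #|legs v|%:R / 2.
Proof.
rewrite /leg_root_weight -big_mkcond sumr_const.
have -> : \sum_(v | multi_leg v) #|legs v|%:R / 2 = \sum_(p in leg_pairs) 2^-1 :> R.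
  rewrite (sum_leg_pairs (fun _ _ => 2^-1)); apply: eq_bigr => v _.
  by rewrite sumr_const mulr_natl.
by rewrite sumr_const ler_wpMn2l ?leq_imset_card //; lra.
Qed.

Lemma half_legs_le_branch_sum (g : T -> R) v : resolving e g -> multi_leg v ->
  #|legs v|%:R / 2 <= \sum_(a in legs v) \sum_(z in branch v a) g z.
Proof.
move=> g_res /andP [_ legs_gt1]; have g_ge0 := resolving_ge0 g_res.
apply: half_card_le_sum => // a b.
rewrite !inE => /leg_adj eva /leg_adj evb nab.
apply: le_trans (g_res.2 a b nab) _; apply: ler_sum_cover2 => // z.
exact: resolved_in_branches.
Qed.

Lemma min_resolving_off_leg_cover (g : T -> R) x : (exists w, major w) ->
  min_resolving e g -> x \notin leg_cover -> g x = 0.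
Proof.
move=> has_major [g_res g_min] xN; have g_ge0 := resolving_ge0 g_res.
have lower : g x + \sum_(v | multi_leg v) #|legs v|%:R / 2 <= \sum_z g z.
  apply: le_trans (ler_add_sum_notin g_ge0 xN); rewrite lerD2l.
  apply: le_trans (ler_sum_disjoint_family g_ge0 leg_pairs_branch_unique).
  rewrite (sum_leg_pairs (fun v a => \sum_(z in branch v a) g z)).
  by apply: ler_sum => v; exact: half_legs_le_branch_sum.
have upper : \sum_z g z <= \sum_(v | multi_leg v) #|legs v|%:R / 2.
  exact: le_trans (g_min _ (leg_root_weight_resolving has_major)) sum_leg_root_weight.
by apply/eqP; rewrite eq_le g_ge0 andbT; lra.
Qed.

End MinimumResolving.
End Tree.

Theorem corollary3p14 (R : realType) (T : finType) (e : rel T) :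
  is_tree e -> 1 <= ex_T e ->
  forall g : T -> R, min_resolving e g ->
  forall x : T,
    major e x || interior_deg2 e x || [exists v, in_M1 e v && in_Tv e v x] ->
    g x = 0%R.
Proof.
move=> [[esym eirr] econn eacyc] /card_gt0P [v0].
rewrite inE => /andP [major_v0 _] g g_min x x_special.
apply: (min_resolving_off_leg_cover esym eirr econn eacyc _ g_min).
  by exists v0.
exact: special_notin_leg_cover.
Qed.
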